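(* Let $(M,g)$ be a $d$-dimensional Lorentzian manifold with $d>5$, $p\in M$, and $\{\ell,n,m^3,\dots,m^d\}$ a null frame at $p$. Suppose the Weyl tensor $C$ at $p$ is invariant under the subgroup of the Lorentz group that fixes $\ell$, $n$ and $m^3$ and acts as $SO(d-3)$, in its standard representation, on $\mathrm{span}\{m^4,\dots,m^d\}$. Let $\kappa=\mathrm{diag}(d-3,-1,-1,\dots,-1)$ be the $(d-2)\times(d-2)$ diagonal matrix (indexed by $3,\dots,d$). Then in this frame there are real numbers $\check\lambda_1,\hat\lambda_1,\check v,\hat v,s,\bar R$ such that $\check H=\check\lambda_1\kappa$, $\check T=0$, $\check v^i=\delta^i_3\check v$; $A_{ij}=0$, $\bar S=s\kappa$, $\bar C_{ijkl}=0$ (with $\bar R$ arbitrary); $\hat H=\hat\lambda_1\kappa$, $\hat T=0$, $\hat v^i=\delta^i_3\hat v$.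
   Context: Null frame convention: $g=2\,\ell\, n+\delta_{ij}m^im^j$, i.e. $g(\ell,n)=1$, $g(m^i,m^j)=\delta_{ij}$, all other products zero. Frame indices: $0$ refers to $\ell$, $1$ to $n$, $i,j,k,l\in\{3,\dots,d\}$ to the $m^i$; let $N=d-2$. $C_{abcd}$ are the frame components of the Weyl tensor. Definitions: $\hat H_{ij}=C_{0i0j}$, $\check H_{ij}=C_{1i1j}$ (symmetric, traceless matrices); $A_{ij}=C_{01ij}$; $\bar R_{ij}=\sum_k C_{kikj}$, $\bar R=\sum_i\bar R_{ii}$, $\bar S_{ij}=\bar R_{ij}-\frac1N\bar R\delta_{ij}$; $\bar C_{ijkl}$ is the Weyl (totally trace-free) part of the algebraic curvature tensor $C_{ijkl}$ on $\mathbb R^N$. The tensor $C_{1ijk}$ (antisymmetric in $j,k$) decomposes uniquely as $C_{1ijk}=\delta_{ij}\check v_k-\delta_{ik}\check v_j+\check T_{ijk}$ with $\sum_i\check T_{iji}=0$ and $\check T_{(ijk)}=0$ (so $\check v_k=\frac{1}{N-1}\sum_i C_{1iik}$); likewise $C_{0ijk}=\delta_{ij}\hat v_k-\delta_{ik}\hat v_j+\hat T_{ijk}$ with $\hat T$ of the same type. *)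

From HB Require Import structures.
From mathcomp Require Import all_boot all_order all_algebra.
From mathcomp Require Import reals.
Set Implicit Arguments.
Unset Strict Implicit.
Unset Printing Implicit Defensive.
Import Order.TTheory GRing.Theory Num.Theory.
Local Open Scope ring_scope.

(* Frame indices: 'I_d.  Index 0 <-> l, index 1 <-> n, index 2 <-> m^3, and
   index a (2 <= a < d) <-> m^(a+1).  So paper index i in {3..d} is a = i-1. *)

Section Defs.
Variables (R : realType) (d : nat).

Definition frame_tensor := 'I_d -> 'I_d -> 'I_d -> 'I_d -> R.

(* g(l,n)=1, g(m^i,m^j)=delta_ij, others 0.  This matrix is its own inverse. *)
Definition eta (a b : 'I_d) : R :=
  if ((val a == 0%N) && (val b == 1%N)) || ((val a == 1%N) && (val b == 0%N)) then 1
  else if (a == b) && (2 <= val a)%N then 1 else 0.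

Definition is_weyl (C : frame_tensor) : Prop :=
  [/\ (forall a b c e, C a b c e = - C b a c e),
      (forall a b c e, C a b c e = C c e a b),
      (forall a b c e, C a b c e + C a c e b + C a e b c = 0)
    & (forall b e, \sum_(a < d) \sum_(c < d) eta a c * C a b c e = 0)].

Definition in_stab_SO (L : 'M[R]_d) : Prop :=
  [/\ (forall a b : 'I_d, ((val a < 3)%N || (val b < 3)%N) -> L a b = (a == b)%:R),
      L^T *m L = 1%:M
    & \det L = 1].

Definition invariant_under (L : 'M[R]_d) (C : frame_tensor) : Prop :=
  forall a b c e,
    C a b c e =
    \sum_(a' < d) \sum_(b' < d) \sum_(c' < d) \sum_(e' < d)
      L a' a * L b' b * L c' c * L e' e * C a' b' c' e'.

Definition spatial (i : 'I_d) : bool := (2 <= val i)%N.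

Definition kron (i j : 'I_d) : R := (i == j)%:R.

Definition Nr : R := d%:R - 2.

Definition kappa (i j : 'I_d) : R :=
  kron i j * (if val i == 2%N then d%:R - 3 else -1).

(* H_{ij} = C_{a i a j}: a = l gives \hat H, a = n gives \check H *)
Definition Hcomp (C : frame_tensor) (a i j : 'I_d) : R := C a i a j.

Definition vcomp (C : frame_tensor) (a k : 'I_d) : R :=
  (Nr - 1)^-1 * \sum_(i < d | spatial i) C a i i k.

Definition Tcomp (C : frame_tensor) (a i j k : 'I_d) : R :=
  C a i j k - kron i j * vcomp C a k + kron i k * vcomp C a j.

Definition Rbar_ij (C : frame_tensor) (i j : 'I_d) : R :=
  \sum_(k < d | spatial k) C k i k j.

Definition Rbar (C : frame_tensor) : R :=
  \sum_(i < d | spatial i) Rbar_ij C i i.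

Definition Sbar (C : frame_tensor) (i j : 'I_d) : R :=
  Rbar_ij C i j - Nr^-1 * Rbar C * kron i j.

(* Weyl (totally trace-free) part of C_{ijkl} on R^N *)
Definition Cbar (C : frame_tensor) (i j k l : 'I_d) : R :=
  C i j k l
  - (Nr - 2)^-1 * (kron i k * Rbar_ij C j l - kron i l * Rbar_ij C j k
                   - kron j k * Rbar_ij C i l + kron j l * Rbar_ij C i k)
  + Rbar C / ((Nr - 1) * (Nr - 2)) * (kron i k * kron j l - kron i l * kron j k).

End Defs.

Arguments eta {R d}.
Arguments kron {R d}.
Arguments kappa {R d}.
Arguments Nr {R}.
Arguments spatial {d}.
Arguments is_weyl {R d}.
Arguments in_stab_SO {R d}.
Arguments invariant_under {R d}.

Definition fidx (d : nat) (hd : (5 < d)%N) (m : nat) : 'I_d :=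
  insubd (Ordinal (ltn_trans (isT : (0 < 5)%N) hd)) m.

(* The stabiliser contains the signed permutation matrices of the transverse
   axes m^4, ..., m^d of determinant 1: reflections in two axes, transpositions
   combined with the reversal of one axis, and 3-cycles.  Invariance under the
   reflections kills every frame component in which a transverse axis occurs an
   odd number of times (d > 5 leaves a second transverse axis to pair it with);
   the transpositions make the surviving components independent of which
   transverse axes occur; the 3-cycles together with the Bianchi identity kill
   the components with three distinct transverse indices.  Hence C_{0i0j},
   C_{1i1j}, C_{0ijk}, C_{1ijk} are built from delta and the projector onto m^3,
   C_{01ij} vanishes, and C_{ijkl} has the Kulkarni-Nomizu form with two
   parameters.  The trace-free conditions of C then turn each block into a
   multiple of kappa = N proj3 - delta and make the Weyl part of C_{ijkl} vanish. *)

From Pilot Require Import Defs.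
From HB Require Import structures.
From mathcomp Require Import all_boot all_order all_algebra all_fingroup.
From mathcomp Require Import reals ring lra.
Import Order.TTheory GRing.Theory Num.Theory.
Set Implicit Arguments.
Unset Strict Implicit.
Unset Printing Implicit Defensive.
Local Open Scope ring_scope.

Section SignedPermutation.
Variables (R : realType) (d : nat).
Implicit Types (q : {perm 'I_d}) (s : 'I_d -> R) (C : frame_tensor R d).

Definition signed_perm_mx q s : 'M[R]_d := \matrix_(i, j) ((i == q j)%:R * s j).

Lemma signed_perm_mx_stab q s :
    (forall i, s i * s i = 1) ->
    (forall i, (val i < 3)%N -> q i = i /\ s i = 1) ->
    (-1) ^+ odd_perm q * \prod_i s i = 1 ->
  in_stab_SO (signed_perm_mx q s).
Proof.
move=> s2 fix3 det1; split.
- move=> a b ab3; rewrite mxE.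
  have [a3|a3] := boolP (val a < 3)%N; last first.
    have b3 : (val b < 3)%N by move: ab3; rewrite (negbTE a3).
    by have [-> ->] := fix3 b b3; rewrite mulr1.
  have [qa sa] := fix3 a a3.
  rewrite -{1}qa (inj_eq (@perm_inj _ q)).
  by case: eqP => [<-|_]; rewrite ?sa ?mulr1 ?mul0r.
- apply/matrixP => i j; rewrite !mxE (big_only1 (q i)) //; last first.
    by move=> x xn _; rewrite !mxE (negbTE xn) !mul0r.
  rewrite !mxE eqxx (inj_eq (@perm_inj _ q)) mul1r.
  by case: eqP => [->|_]; rewrite ?mul1r ?s2 // !mul0r mulr0.
- have -> : signed_perm_mx q s = perm_mx q^-1 *m diag_mx (\row_j s j).
    apply/matrixP => i j; rewrite mul_mx_diag mxE perm_mxEsub !mxE.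
    by rewrite -{1}(permKV q i) (inj_eq (@perm_inj _ q)).
  rewrite det_mulmx det_perm det_diag odd_permV -[RHS]det1; congr (_ * _).
  by apply: eq_bigr => i _; rewrite mxE.
Qed.

Lemma signed_perm_invariant q s C :
    invariant_under (signed_perm_mx q s) C ->
  forall a b c e, C a b c e = s a * s b * s c * s e * C (q a) (q b) (q c) (q e).
Proof.
move=> invC a b c e; rewrite invC.
rewrite (big_only1 (q a)) // => [|x xa _]; last first.
  by do 3! (apply: big1 => ? _); rewrite !mxE (negbTE xa) !mul0r.
rewrite (big_only1 (q b)) // => [|x xb _]; last first.
  by do 2! (apply: big1 => ? _); rewrite !mxE (negbTE xb) !(mul0r, mulr0).
rewrite (big_only1 (q c)) // => [|x xc _]; last first.
  by apply: big1 => ? _; rewrite !mxE (negbTE xc) !(mul0r, mulr0).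
rewrite (big_only1 (q e)) // => [|x xe _]; last first.
  by rewrite !mxE (negbTE xe) !(mul0r, mulr0).
by rewrite !mxE !eqxx !mul1r.
Qed.

End SignedPermutation.

Definition transverse d (i : 'I_d) := (3 <= val i)%N.

Lemma transverse_eqF d (i x : 'I_d) : transverse x -> (val i < 3)%N -> (i == x) = false.
Proof. by move=> tx i3; apply: contraTF i3 => /eqP->; rewrite -leqNgt. Qed.

Section StabilizerSymmetries.
Variables (R : realType) (d : nat) (C : frame_tensor R d).
Hypothesis C_inv : forall L : 'M[R]_d, in_stab_SO L -> invariant_under L C.
Variables (x y : 'I_d).
Hypotheses (tx : transverse x) (ty : transverse y) (xy : x != y).

Definition sign2 (i : 'I_d) : R := if (i == x) || (i == y) then -1 else 1.
(* A transposition of two axes has determinant -1; reversing one of them restores it. *)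
Definition sign1 (i : 'I_d) : R := if i == x then -1 else 1.

Lemma sign2_invariant a b c e :
  C a b c e = sign2 a * sign2 b * sign2 c * sign2 e * C a b c e.
Proof.
have stab : in_stab_SO (signed_perm_mx (1%g : {perm 'I_d}) sign2).
  apply: signed_perm_mx_stab.
  - by move=> i; rewrite /sign2; case: (_ || _); rewrite ?mulrNN mulr1.
  - by move=> i i3; rewrite perm1 /sign2 !transverse_eqF.
  rewrite odd_perm1 expr0 mul1r (bigD1 x) // (bigD1 y) /=; last by rewrite eq_sym.
  rewrite big1 => [|i /andP [ix iy]]; last by rewrite /sign2 (negbTE ix) (negbTE iy).
  by rewrite /sign2 !eqxx orbT /= mulr1 mulrNN mulr1.
by rewrite {1}(signed_perm_invariant (C_inv stab)) !perm1.
Qed.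

Lemma sign2_odd_eq0 a b c e :
  sign2 a * sign2 b * sign2 c * sign2 e = -1 -> C a b c e = 0.
Proof.
move=> sign_odd; apply/eqP; have /eqP := sign2_invariant a b c e.
by rewrite sign_odd mulN1r -subr_eq0 opprK -mulr2n -mulr_natr mulf_eq0 pnatr_eq0 orbF.
Qed.

Lemma tperm_invariant a b c e :
  C a b c e = sign1 a * sign1 b * sign1 c * sign1 e *
    C (tperm x y a) (tperm x y b) (tperm x y c) (tperm x y e).
Proof.
have stab : in_stab_SO (signed_perm_mx (tperm x y) sign1).
  apply: signed_perm_mx_stab.
  - by move=> i; rewrite /sign1; case: (_ == _); rewrite ?mulrNN mulr1.
  - by move=> i i3; rewrite /sign1 transverse_eqF // tpermD // eq_sym transverse_eqF.
  rewrite odd_tperm xy expr1 (bigD1 x) //= big1 => [|i ix]; last by rewrite /sign1 (negbTE ix).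
  by rewrite /sign1 eqxx mulr1 mulrNN mulr1.
exact: (signed_perm_invariant (C_inv stab)).
Qed.

Lemma cycle3_invariant z : transverse z -> y != z ->
  forall a b c e, C a b c e =
    C ((tperm x y * tperm y z)%g a) ((tperm x y * tperm y z)%g b)
      ((tperm x y * tperm y z)%g c) ((tperm x y * tperm y z)%g e).
Proof.
move=> tz yz a b c e.
have stab : in_stab_SO (signed_perm_mx (tperm x y * tperm y z)%g (fun _ => 1 : R)).
  apply: signed_perm_mx_stab => [i|i i3|]; first by rewrite mulr1.
    by rewrite permM !tpermD // eq_sym transverse_eqF.
  by rewrite odd_permM !odd_tperm xy yz expr0 mul1r big1.
by rewrite {1}(signed_perm_invariant (C_inv stab)) !mul1r.
Qed.

End StabilizerSymmetries.

Section WeylSymmetries.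
Variables (R : realType) (d : nat) (C : frame_tensor R d).
Hypothesis C_weyl : is_weyl C.

Lemma weyl_antisymL a b c e : C a b c e = - C b a c e.
Proof. by case: C_weyl. Qed.

Lemma weyl_pair_sym a b c e : C a b c e = C c e a b.
Proof. by case: C_weyl. Qed.

Lemma weyl_antisymR a b c e : C a b c e = - C a b e c.
Proof. by rewrite weyl_pair_sym weyl_antisymL weyl_pair_sym. Qed.

Lemma weyl_bianchi a b c e : C a b c e + C a c e b + C a e b c = 0.
Proof. by case: C_weyl. Qed.

Lemma weyl_diagL a c e : C a a c e = 0.
Proof.
apply/eqP; have /eqP := weyl_antisymL a a c e.
by rewrite -addr_eq0 -mulr2n -mulr_natr mulf_eq0 pnatr_eq0 orbF.
Qed.

Lemma weyl_diagR a b c : C a b c c = 0.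
Proof. by rewrite weyl_pair_sym weyl_diagL. Qed.

Lemma weyl_flip_pairs a b : C a b a b = C b a b a.
Proof. by rewrite weyl_antisymL weyl_antisymR opprK. Qed.

Lemma eta_double_sum (F : 'I_d -> 'I_d -> R) (l n : 'I_d) : val l = 0%N -> val n = 1%N ->
  \sum_(a < d) \sum_(c < d) Defs.eta a c * F a c = F l n + F n l + \sum_(i < d | spatial i) F i i.
Proof.
move=> vl vn; pose partner a := if a == l then n else if a == n then l else a.
have etaE a c : @Defs.eta R d a c = (c == partner a)%:R.
  rewrite /Defs.eta /partner -[a == l]val_eqE -[a == n]val_eqE vl vn.
  case: a c => [[|[|a]] ?] [[|[|c]] ?] /=; rewrite -?val_eqE ?vl ?vn //=.
  by rewrite eq_sym; case: (_ == _).
rewrite (eq_bigr (fun a => F a (partner a))) => [|a _]; last first.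
  rewrite (big_only1 (partner a)) // ?etaE ?eqxx ?mul1r // => c cp _.
  by rewrite etaE (negbTE cp) mul0r.
have ln : l != n by rewrite -val_eqE vl vn.
have nl : (n == l) = false by rewrite eq_sym (negbTE ln).
rewrite (bigD1 l) // (bigD1 n) 1?eq_sym //= /partner !eqxx nl addrA.
congr (_ + _); apply: eq_big => [a|a /andP [al an]]; last by rewrite (negbTE al) (negbTE an).
by rewrite -!val_eqE vl vn /spatial; case: a => [[|[|a]] ?].
Qed.

Lemma weyl_null_trace (x0 : 'I_d) : (1 < d)%N -> (val x0 < 2)%N ->
  \sum_(i < d | spatial i) C x0 i x0 i = 0.
Proof.
move=> d2 x02; set l := Ordinal (ltnW d2); set n := Ordinal d2.
have [_ _ _ /(_ x0 x0)] := C_weyl; rewrite (@eta_double_sum _ l n) //.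
have -> : C l x0 n x0 + C n x0 l x0 = 0.
  have [->|->] : x0 = l \/ x0 = n.
    by case: x0 x02 => [[|[|]] ?] // _; [left|right]; apply: val_inj.
  - by rewrite weyl_diagL weyl_diagR addr0.
  - by rewrite weyl_diagR weyl_diagL addr0.
rewrite add0r => trace0; rewrite -[RHS]trace0.
by apply: eq_bigr => i _; apply: weyl_flip_pairs.
Qed.

End WeylSymmetries.

Section Spatial.
Variables (R : realType) (d : nat).
Implicit Types (i j p : 'I_d).

Lemma kronC i j : kron i j = kron j i :> R.
Proof. by rewrite /kron eq_sym. Qed.

Lemma kronii i : kron i i = 1 :> R.
Proof. by rewrite /kron eqxx. Qed.

Lemma sum_spatial_kron p (G H : 'I_d -> R) : spatial p ->
  \sum_(k < d | spatial k) (kron k p * G k + H k) = G p + \sum_(k < d | spatial k) H k.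
Proof.
move=> sp; rewrite big_split /=; congr (_ + _).
rewrite (bigD1 p) //= kronii mul1r big1 ?addr0 // => k /andP [_ kp].
by rewrite /kron (negbTE kp) mul0r.
Qed.

Lemma sum_spatial_const (c : R) : (1 < d)%N -> \sum_(k < d | spatial k) c = c * Nr d.
Proof.
case: d => [|[|d']] // _; rewrite big_mkcond /= !big_ord_recl /= !add0r.
rewrite (eq_bigr (fun _ => c)) // sumr_const card_ord /Nr -mulr_natr.
by rewrite -[d'.+2]addn2 natrD; ring.
Qed.

Lemma Nr_neq0s : (4 < d)%N -> [/\ Nr d != 0 :> R, Nr d - 1 != 0 :> R & Nr d - 2 != 0 :> R].
Proof.
move=> d5; have : 5%:R <= d%:R :> R by rewrite ler_nat.
by rewrite /Nr; split; apply/eqP; lra.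
Qed.

End Spatial.

Arguments kronC {R d}.

Definition frame_ord d (hd : (5 < d)%N) (k : nat) (hk : (k < 6)%N) : 'I_d :=
  Ordinal (leq_trans hk hd).

Ltac ord_neq := repeat match goal with
 | |- context [?u == ?u] => rewrite eqxx
 | H : is_true (?u != ?v) |- context [?u == ?v] => rewrite (negbTE H)
 | H : is_true (?v != ?u) |- context [?u == ?v] => rewrite (eq_sym u v) (negbTE H)
 | H : is_true (transverse ?v) |- context [?u == ?v] =>
     rewrite (transverse_eqF (i:=u) H); [|done]
 | H : is_true (transverse ?u) |- context [?u == ?v] =>
     rewrite (eq_sym u v) (transverse_eqF (i:=v) H); [|done]
 end.

Ltac tperm_simpl := repeat match goal with
 | |- context [@fun_of_perm ?T (@tperm _ ?x ?y) ?z] =>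
     first [ rewrite (@tpermL T x y) | rewrite (@tpermR T x y)
           | rewrite (@tpermD T x y z); [|by ord_neq|by ord_neq] ]
 end.

Section InvariantWeylTensor.
Variables (R : realType) (d : nat) (hd : (5 < d)%N) (C : frame_tensor R d).
Hypotheses (C_weyl : is_weyl C)
  (C_inv : forall L : 'M[R]_d, in_stab_SO L -> invariant_under L C).

Definition m3 := frame_ord hd (isT : (2 < 6)%N).
Definition m4 := frame_ord hd (isT : (3 < 6)%N).
Definition m5 := frame_ord hd (isT : (4 < 6)%N).
Definition m6 := frame_ord hd (isT : (5 < 6)%N).

Definition proj3 (i j : 'I_d) : R := kron i m3 * kron j m3.

Ltac kron_simpl := rewrite /proj3 /kron; ord_neq; simpl; ring.

Lemma transverse_spatial (i : 'I_d) : spatial i -> i != m3 -> transverse i.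
Proof.
rewrite /spatial /transverse => i2 /eqP im3; rewrite ltn_neqAle i2 andbT.
by apply/eqP => i_eq2; apply: im3; apply: val_inj.
Qed.

Lemma exists_transverse_avoiding (p q : 'I_d) :
  exists y : 'I_d, [/\ transverse y, y != p & y != q].
Proof.
set s := [:: m4; m5; m6].
have [y /andP [ys ypq] | none] := pickP (fun y => (y \in s) && (y \notin [:: p; q])).
  exists y; move: ypq; rewrite !inE negb_or => /andP [-> ->].
  by split=> //; move: ys; rewrite !inE => /or3P [] /eqP ->.
have sub : {subset s <= [:: p; q]}.
  by move=> y ys; have := none y; rewrite ys /= => /negbFE.
by have := uniq_leq_size (isT : uniq s) sub.
Qed.

Ltac sign2_vanish u v :=
  apply: (sign2_odd_eq0 C_inv (x:=u) (y:=v));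
  [done|done|by ord_neq|rewrite /sign2; ord_neq; simpl; ring].

Ltac swap_transverse u v :=
  rewrite {1}(tperm_invariant C_inv (x:=u) (y:=v));
  [tperm_simpl; rewrite /sign1; ord_neq; simpl; ring|done|done|by ord_neq].

Lemma C_fixed2_spatial2 (a b i j : 'I_d) : (val a < 3)%N -> (val b < 3)%N ->
  spatial i -> spatial j -> C a b i j = 0.
Proof.
move=> a3 b3 si sj.
have [<-|ij] := eqVneq i j; first exact: weyl_diagR.
have [im3|im3] := eqVneq i m3.
  have tj : transverse j by apply: transverse_spatial; rewrite // -im3 eq_sym.
  have [y [ty yj _]] := exists_transverse_avoiding j j.
  rewrite im3; sign2_vanish j y.
have ti := transverse_spatial si im3.
have [y [ty yi yj]] := exists_transverse_avoiding i j.
sign2_vanish i y.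
Qed.

Lemma C_fixed_spatial_diag (x0 i j : 'I_d) : (val x0 < 3)%N -> spatial i -> spatial j ->
  C x0 i x0 j = C x0 m4 x0 m4 * kron i j + (C x0 m3 x0 m3 - C x0 m4 x0 m4) * proj3 i j.
Proof.
move=> x03 si sj; have tm4 : transverse m4 by [].
have [->|im3] := eqVneq i m3.
  have [->|jm3] := eqVneq j m3; first by kron_simpl.
  have tj := transverse_spatial sj jm3.
  have [y [ty yj _]] := exists_transverse_avoiding j j.
  suff -> : C x0 m3 x0 j = 0 by kron_simpl.
  sign2_vanish j y.
have ti := transverse_spatial si im3.
have [->|jm3] := eqVneq j m3.
  have [y [ty yi _]] := exists_transverse_avoiding i i.
  suff -> : C x0 i x0 m3 = 0 by kron_simpl.
  sign2_vanish i y.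
have tj := transverse_spatial sj jm3.
have [<-|ij] := eqVneq i j.
  suff -> : C x0 i x0 i = C x0 m4 x0 m4 by kron_simpl.
  have [->//|im4] := eqVneq i m4.
  swap_transverse m4 i.
have [y [ty yi yj]] := exists_transverse_avoiding i j.
suff -> : C x0 i x0 j = 0 by kron_simpl.
sign2_vanish i y.
Qed.

Lemma C_fixed_transverse_trace (x0 i : 'I_d) : (val x0 < 3)%N -> transverse i ->
  C x0 i i m3 = C x0 m4 m4 m3.
Proof.
move=> x03 ti; have tm4 : transverse m4 by [].
have [->//|im4] := eqVneq i m4.
swap_transverse m4 i.
Qed.

Lemma C_fixed_spatial3 (x0 i j k : 'I_d) : (val x0 < 3)%N ->
    spatial i -> spatial j -> spatial k ->
  C x0 i j k = C x0 m4 m4 m3 * (kron i j * kron k m3 - kron i k * kron j m3).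
Proof.
move=> x03 si sj sk; have tm4 : transverse m4 by [].
have [->|im3] := eqVneq i m3.
  have [->|jm3] := eqVneq j m3.
    have [->|km3] := eqVneq k m3; first by rewrite weyl_diagR //; kron_simpl.
    have tk := transverse_spatial sk km3.
    have [y [ty yk _]] := exists_transverse_avoiding k k.
    suff -> : C x0 m3 m3 k = 0 by kron_simpl.
    sign2_vanish k y.
  have tj := transverse_spatial sj jm3.
  have [->|km3] := eqVneq k m3.
    have [y [ty yj _]] := exists_transverse_avoiding j j.
    suff -> : C x0 m3 j m3 = 0 by kron_simpl.
    sign2_vanish j y.
  have tk := transverse_spatial sk km3.
  have [<-|jk] := eqVneq j k; first by rewrite weyl_diagR //; kron_simpl.
  have [y [ty yj yk]] := exists_transverse_avoiding j k.
  suff -> : C x0 m3 j k = 0 by kron_simpl.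
  sign2_vanish j y.
have ti := transverse_spatial si im3.
have [->|jm3] := eqVneq j m3.
  have [->|km3] := eqVneq k m3; first by rewrite weyl_diagR //; kron_simpl.
  have tk := transverse_spatial sk km3.
  have [<-|ik] := eqVneq i k.
    by rewrite weyl_antisymR // C_fixed_transverse_trace //; kron_simpl.
  have [y [ty yi yk]] := exists_transverse_avoiding i k.
  suff -> : C x0 i m3 k = 0 by kron_simpl.
  sign2_vanish i y.
have tj := transverse_spatial sj jm3.
have [->|km3] := eqVneq k m3.
  have [<-|ij] := eqVneq i j; first by rewrite C_fixed_transverse_trace //; kron_simpl.
  have [y [ty yi yj]] := exists_transverse_avoiding i j.
  suff -> : C x0 i j m3 = 0 by kron_simpl.
  sign2_vanish i y.
have tk := transverse_spatial sk km3.
have [<-|jk] := eqVneq j k; first by rewrite weyl_diagR //; kron_simpl.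
suff -> : C x0 i j k = 0 by kron_simpl.
have [eij|ij] := eqVneq i j.
  subst j; have [y [ty yk yi]] := exists_transverse_avoiding k i.
  sign2_vanish k y.
have [eik|ik] := eqVneq i k.
  subst k; have [y [ty yj yi]] := exists_transverse_avoiding j i.
  sign2_vanish j y.
(* three distinct transverse indices: cyclic invariance plus the Bianchi identity *)
have ki : k != i by rewrite eq_sym.
have cyc1 : C x0 i j k = C x0 k i j.
  by rewrite {1}(cycle3_invariant C_inv ti tj ij tk jk) !permM; tperm_simpl.
have cyc2 : C x0 k i j = C x0 j k i.
  by rewrite {1}(cycle3_invariant C_inv tk ti ki tj ij) !permM; tperm_simpl.
have := weyl_bianchi C_weyl x0 i j k; lra.
Qed.

(* The two parameters of an SO(d-3)-invariant algebraic curvature tensor on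
   span{m^3,...,m^d}: [mu] is the sectional curvature of transverse planes and
   [mu + nu] that of the planes containing m^3. *)
Definition mu := C m4 m5 m4 m5.
Definition nu := - C m3 m4 m4 m3 - mu.

Definition curv_form (i j k l : 'I_d) : R :=
  mu * (kron i k * kron j l - kron i l * kron j k) +
  nu * (kron i k * proj3 j l - kron i l * proj3 j k - kron j k * proj3 i l + kron j l * proj3 i k).

Lemma curv_form_antisymL i j k l : curv_form i j k l = - curv_form j i k l.
Proof. by rewrite /curv_form; ring. Qed.

Lemma curv_form_pair_sym i j k l : curv_form i j k l = curv_form k l i j.
Proof. by rewrite /curv_form /proj3 (kronC k i) (kronC l j) (kronC k j) (kronC l i); ring. Qed.

Lemma C_transverse_sectional (i j : 'I_d) : transverse i -> transverse j -> i != j ->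
  C i j i j = mu.
Proof.
move=> ti tj ij.
have slide a b b' : transverse a -> transverse b -> transverse b' -> a != b -> a != b' ->
    C a b a b = C a b' a b'.
  move=> ta tb tb' ab ab'; have [->//|bb'] := eqVneq b b'.
  swap_transverse b b'.
have tm4 : transverse m4 by []; have tm5 : transverse m5 by [].
have [im4|im4] := eqVneq i m4; first by subst i; rewrite (slide _ _ m5).
by rewrite (slide _ _ m4) // weyl_flip_pairs // (slide _ _ m5) // eq_sym.
Qed.

Lemma C_transverse4 (i j k l : 'I_d) :
    transverse i -> transverse j -> transverse k -> transverse l ->
  C i j k l = mu * (kron i k * kron j l - kron i l * kron j k).
Proof.
move=> ti tj tk tl.
have [<-|ij] := eqVneq i j; first by rewrite weyl_diagL //; ring.
have [<-|kl] := eqVneq k l; first by rewrite weyl_diagR //; ring.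
have ji : j != i by rewrite eq_sym.
have [eik|ik] := eqVneq i k.
  subst k; have [ejl|jl] := eqVneq j l.
    by subst l; rewrite C_transverse_sectional //; kron_simpl.
  suff -> : C i j i l = 0 by kron_simpl.
  sign2_vanish j i.
have [eil|il] := eqVneq i l.
  subst l; have [ejk|jk] := eqVneq j k.
    by subst k; rewrite weyl_antisymR // C_transverse_sectional //; kron_simpl.
  suff -> : C i j k i = 0 by kron_simpl.
  sign2_vanish j i.
suff -> : C i j k l = 0 by kron_simpl.
have [ejk|jk] := eqVneq j k; first by subst k; sign2_vanish i j.
have [ejl|jl] := eqVneq j l; first by subst l; sign2_vanish i j.
have lj : l != j by rewrite eq_sym.
have cyc1 : C i j k l = C i l j k.
  by rewrite {1}(cycle3_invariant C_inv tj tk jk tl kl) !permM; tperm_simpl.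
have cyc2 : C i l j k = C i k l j.
  by rewrite {1}(cycle3_invariant C_inv tl tj lj tk jk) !permM; tperm_simpl.
have := weyl_bianchi C_weyl i j k l; lra.
Qed.

Lemma C_spatial4 (i j k l : 'I_d) : spatial i -> spatial j -> spatial k -> spatial l ->
  C i j k l = curv_form i j k l.
Proof.
have C_m3 j' k' l' : spatial j' -> spatial k' -> spatial l' -> C m3 j' k' l' = curv_form m3 j' k' l'.
  move=> sj sk sl; rewrite C_fixed_spatial3 // /curv_form /nu /proj3 kronii.
  by rewrite (kronC m3 k') (kronC m3 l'); ring.
move=> si sj sk sl.
have [->|im3] := eqVneq i m3; first exact: C_m3.
have [->|jm3] := eqVneq j m3.
  by rewrite weyl_antisymL // C_m3 // (curv_form_antisymL i).
have [->|km3] := eqVneq k m3.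
  by rewrite weyl_pair_sym // C_m3 // (curv_form_pair_sym i).
have [->|lm3] := eqVneq l m3.
  by rewrite weyl_pair_sym // weyl_antisymL // C_m3 // curv_form_antisymL opprK curv_form_pair_sym.
have ti := transverse_spatial si im3; have tj := transverse_spatial sj jm3.
have tk := transverse_spatial sk km3; have tl := transverse_spatial sl lm3.
by rewrite C_transverse4 // /curv_form; kron_simpl.
Qed.

Lemma m3_spatial : spatial m3. Proof. by []. Qed.

Let d_gt1 : (1 < d)%N := ltn_trans (isT : (1 < 5)%N) hd.

Lemma Rbar_ij_spatial (i j : 'I_d) : spatial i -> spatial j ->
  Rbar_ij C i j = (mu * (Nr d - 1) + nu) * kron i j + nu * (Nr d - 2) * proj3 i j.
Proof.
move=> si sj; rewrite /Rbar_ij.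
rewrite (eq_bigr (fun k => kron k j * (- mu * kron k i - nu * kron i m3 * kron k m3)
   + (kron k i * (- nu * kron k m3 * kron j m3) + (kron k m3 * (nu * kron i j * kron k m3)
   + (mu * kron i j + nu * kron i m3 * kron j m3))))) => [|k sk]; last first.
  by rewrite C_spatial4 // /curv_form /proj3 !kronii (kronC i k); ring.
rewrite !sum_spatial_kron ?m3_spatial // (sum_spatial_const _ d_gt1).
by rewrite /proj3 kronii (kronC j i); ring.
Qed.

Lemma Rbar_spatial :
  Rbar C = (mu * (Nr d - 1) + nu) * Nr d + nu * (Nr d - 2).
Proof.
rewrite /Rbar (eq_bigr (fun k => kron k m3 * (nu * (Nr d - 2) * kron k m3)
    + (mu * (Nr d - 1) + nu))) => [|k sk]; last first.
  by rewrite Rbar_ij_spatial // /proj3 !kronii; ring.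
rewrite !sum_spatial_kron ?m3_spatial // (sum_spatial_const _ d_gt1) kronii.
by ring.
Qed.

Lemma kappa_proj3 (i j : 'I_d) : kappa i j = Nr d * proj3 i j - kron i j :> R.
Proof.
rewrite /kappa /proj3 /Nr; have [->|im3] := eqVneq i m3.
  by rewrite kronii (kronC m3 j) /=; ring.
have -> : (val i == 2%N) = false by apply: contraNF im3 => /eqP i2; apply/eqP/val_inj.
by rewrite {2}/kron (negbTE im3) mul0r; ring.
Qed.

Lemma Sbar_spatial (i j : 'I_d) : spatial i -> spatial j ->
  Sbar C i j = nu * (Nr d - 2) / Nr d * kappa i j.
Proof.
have [N0 _ _] := Nr_neq0s R (ltnW hd).
by move=> si sj; rewrite /Sbar Rbar_ij_spatial // Rbar_spatial kappa_proj3; field.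
Qed.

Lemma Cbar_spatial (i j k l : 'I_d) : spatial i -> spatial j -> spatial k -> spatial l ->
  Cbar C i j k l = 0.
Proof.
have [_ N1 N2] := Nr_neq0s R (ltnW hd).
move=> si sj sk sl; rewrite /Cbar C_spatial4 // !Rbar_ij_spatial // Rbar_spatial.
by rewrite /curv_form; field; rewrite N1 N2.
Qed.

Lemma Hcomp_null (x0 i j : 'I_d) : (val x0 < 2)%N -> spatial i -> spatial j ->
  Hcomp C x0 i j = - C x0 m4 x0 m4 * kappa i j.
Proof.
move=> x02 si sj; have x03 : (val x0 < 3)%N by apply: ltnW.
have := weyl_null_trace C_weyl d_gt1 x02.
rewrite (eq_bigr (fun k => kron k m3 * ((C x0 m3 x0 m3 - C x0 m4 x0 m4) * kron k m3)
    + C x0 m4 x0 m4)) => [|k sk]; last first.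
  by rewrite C_fixed_spatial_diag // /proj3 kronii; ring.
rewrite sum_spatial_kron ?m3_spatial // (sum_spatial_const _ d_gt1) kronii => tr0.
rewrite /Hcomp C_fixed_spatial_diag // kappa_proj3.
have -> : C x0 m3 x0 m3 - C x0 m4 x0 m4 = - C x0 m4 x0 m4 * Nr d.
  by rewrite -[LHS]subr0 -tr0; ring.
by ring.
Qed.

Lemma vcomp_fixed (x0 k : 'I_d) : (val x0 < 3)%N -> spatial k ->
  vcomp C x0 k = C x0 m4 m4 m3 * kron k m3.
Proof.
move=> x03 sk; rewrite /vcomp; set w := C x0 m4 m4 m3.
rewrite (eq_bigr (fun i => kron i k * (- w * kron i m3) + w * kron k m3)) => [|i si]; last first.
  by rewrite C_fixed_spatial3 // -/w kronii (kronC k m3); ring.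
rewrite sum_spatial_kron // (sum_spatial_const _ d_gt1).
by have [_ N1 _] := Nr_neq0s R (ltnW hd); field.
Qed.

Lemma Tcomp_fixed (x0 i j k : 'I_d) : (val x0 < 3)%N ->
  spatial i -> spatial j -> spatial k -> Tcomp C x0 i j k = 0.
Proof.
by move=> x03 si sj sk; rewrite /Tcomp C_fixed_spatial3 // !vcomp_fixed //; ring.
Qed.

End InvariantWeylTensor.

Theorem mainTheorem3 (R : realType) (d : nat) (hd : (5 < d)%N)
    (C : frame_tensor R d) :
  is_weyl C ->
  (forall L : 'M[R]_d, in_stab_SO L -> invariant_under L C) ->
  let l := fidx hd 0 in
  let n := fidx hd 1 in
  exists lc lh vc vh s : R,
    (* check quantities *)
        (forall i j, spatial i -> spatial j -> Hcomp C n i j = lc * kappa i j) /\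
        (forall i j k, spatial i -> spatial j -> spatial k -> Tcomp C n i j k = 0) /\
        (forall k, spatial k -> vcomp C n k = (val k == 2%N)%:R * vc) /\
        (* boost-weight zero quantities *)
        (forall i j, spatial i -> spatial j -> C l n i j = 0) /\
        (forall i j, spatial i -> spatial j -> Sbar C i j = s * kappa i j) /\
        (forall i j k m, spatial i -> spatial j -> spatial k -> spatial m ->
           Cbar C i j k m = 0) /\
        (* hat quantities *)
        (forall i j, spatial i -> spatial j -> Hcomp C l i j = lh * kappa i j) /\
        (forall i j k, spatial i -> spatial j -> spatial k -> Tcomp C l i j k = 0) /\
        (forall k, spatial k -> vcomp C l k = (val k == 2%N)%:R * vh).
Proof.
move=> C_weyl C_inv l n.
have l2 : (val l < 2)%N by rewrite val_insubd (ltn_trans _ hd).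
have n2 : (val n < 2)%N by rewrite val_insubd (ltn_trans _ hd).
have m3E k : (val k == 2%N)%:R = kron k (m3 hd) :> R by [].
exists (- C n (m4 hd) n (m4 hd)), (- C l (m4 hd) l (m4 hd)),
  (C n (m4 hd) (m4 hd) (m3 hd)), (C l (m4 hd) (m4 hd) (m3 hd)),
  (nu hd C * (Nr d - 2) / Nr d).
have l3 : (val l < 3)%N by apply: ltnW.
have n3 : (val n < 3)%N by apply: ltnW.
split; first by move=> i j si sj; apply: Hcomp_null.
split; first by move=> i j k si sj sk; apply: Tcomp_fixed.
split; first by move=> k sk; rewrite m3E vcomp_fixed // mulrC.
split; first by move=> i j si sj; apply: C_fixed2_spatial2.
split; first by move=> i j si sj; apply: Sbar_spatial.
split; first by move=> i j k m si sj sk sm; apply: Cbar_spatial.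
split; first by move=> i j si sj; apply: Hcomp_null.
split; first by move=> i j k si sj sk; apply: Tcomp_fixed.
by move=> k sk; rewrite m3E vcomp_fixed // mulrC.
Qed.
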